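(* Let $X$ be a Banach space, $T$ an arbitrary nonempty index set, and $f_t:X\to\mathbb{R}\cup\{+\infty\}$ $(t\in T)$ convex functions. Then the (upper) infinite sum function $\overline{\sum_{t\in T}} f_t : X\to[-\infty,+\infty]$ is convex.
   Context: Let $\mathcal{F}(T)$ denote the family of all finite subsets of $T$, directed by inclusion. For a net $\{\alpha_S\}_{S\in\mathcal{F}(T)}\subset[-\infty,+\infty]$, $\limsup_{S\uparrow T,|S|<\infty}\alpha_S:=\inf_{S_0\in\mathcal{F}(T)}\sup_{S\in\mathcal{F}(T),\,S_0\subset S}\alpha_S$. The infinite (upper) sum is defined by $\big(\overline{\sum_{t\in T}} f_t\big)(x):=\limsup_{S\uparrow T,|S|<\infty}\sum_{t\in S} f_t(x)$ for $x\in X$. A function with values in $[-\infty,+\infty]$ is convex if its epigraph $\{(x,\mu)\in X\times\mathbb{R}: f(x)\le\mu\}$ is convex. *)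

From HB Require Import structures.
From mathcomp Require Import all_boot all_order all_algebra.
From mathcomp Require Import all_classical all_reals all_analysis.
Set Implicit Arguments. Unset Strict Implicit. Unset Printing Implicit Defensive.
Import Order.TTheory GRing.Theory Num.Theory.
Local Open Scope classical_set_scope.
Local Open Scope ring_scope.
Local Open Scope ereal_scope.

Definition epigraph (R : realType) (X : lmodType R) (f : X -> \bar R) : set (X * R) :=
  [set p | f p.1 <= p.2%:E].

Definition convex_set_XR (R : realType) (X : lmodType R) (E : set (X * R)) : Prop :=
  forall p q : X * R, forall l : R, (0 <= l <= 1)%R -> E p -> E q ->
    E ((l *: p.1 + (1 - l) *: q.1)%R, (l * p.2 + (1 - l) * q.2)%R).

Definition convex_efun (R : realType) (X : lmodType R) (f : X -> \bar R) : Prop :=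
  convex_set_XR (epigraph f).

(* upper infinite sum: limsup over the net of finite subsets S of T, directed by inclusion,
   of the finite sums \sum_(t in S) f t x, i.e.
   inf_{S0 finite} sup_{S finite, S0 <= S} \sum_{t in S} f t x *)
Definition upper_infsum (R : realType) (T : choiceType) (X : Type)
    (f : T -> X -> \bar R) (x : X) : \bar R :=
  ereal_inf [set ereal_sup [set \sum_(t \in S) f t x
                             | S in [set S : set T | finite_set S /\ S0 `<=` S]]
            | S0 in [set S0 : set T | finite_set S0]].

From HB Require Import structures.
From mathcomp Require Import all_boot all_order all_algebra.
From mathcomp Require Import all_classical all_reals all_analysis.
From mathcomp Require Import ring.
Import Order.TTheory GRing.Theory Num.Theory.
Local Open Scope classical_set_scope.
Local Open Scope ring_scope.
Local Open Scope ereal_scope.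

(* The upper sum is [inf_(S0) h_(S0)] with [h_(S0) = sup_(S ⊇ S0) g_S], where
   [g_S] is the finite sum over [S]. Each [g_S] is convex: on the epigraph the
   sums are finite, hence so are all terms (none is [-oo]), and convexity adds
   up termwise. Suprema of convex functions are convex, and [S0 |-> h_(S0)] is
   antitone, so the infimum runs over a downward directed family and is convex
   as well. Neither the completeness of [X] nor the nonemptiness of [T] plays
   a role. *)

Section FiniteSums.
Variable R : realType.

Lemma fsbig_lty_fin_num (T : choiceType) (S : set T) (F : T -> \bar R) :
  finite_set S -> (forall t, S t -> F t != -oo) -> \sum_(t \in S) F t < +oo ->
  forall t, S t -> F t \is a fin_num.
Proof.
move=> finS FNy sumFy t St; rewrite fin_numE FNy //=; apply/eqP => Fty.
move: sumFy; rewrite fsbig_finite // big_seq (_ : \sum_(i <- _ | _) F i = +oo) ?ltxx //.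
apply/esum_eqyP.
  by move=> i; rewrite in_fset_set // inE; exact: FNy.
by exists t; rewrite in_fset_set // inE.
Qed.

Lemma fsbig_fine (T : choiceType) (S : set T) (F : T -> \bar R) :
  finite_set S -> (forall t, S t -> F t \is a fin_num) ->
  \sum_(t \in S) F t = (\sum_(t \in S) fine (F t))%:E.
Proof.
move=> finS Ffin; rewrite -fsumEFin //.
by apply: eq_fsbigr => t /[1!inE] St; rewrite fineK // Ffin.
Qed.

End FiniteSums.

Section ConvexEfun.
Variables (R : realType) (X : lmodType R).

Lemma convex_efun_fsbig (T : choiceType) (S : set T) (f : T -> X -> \bar R) :
  finite_set S -> (forall t x, S t -> f t x != -oo) ->
  (forall t, S t -> convex_efun (f t)) ->
  convex_efun (fun x => \sum_(t \in S) f t x).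
Proof.
move=> finS fNy fcvx [x a] [y b] l l01; rewrite /epigraph /= => sumx sumy.
case/andP: (l01) => l0 l1; have l0' : (0 <= 1 - l)%R by rewrite subr_ge0.
have fin_at z c : \sum_(t \in S) f t z <= c%:E -> forall t, S t -> f t z \is a fin_num.
  move=> sumz; apply: fsbig_lty_fin_num => // [t St|]; first exact: fNy.
  exact: le_lt_trans sumz (ltry c).
have [fx fy] := (fin_at x a sumx, fin_at y b sumy).
rewrite fsbig_fine // lee_fin in sumx; rewrite fsbig_fine // lee_fin in sumy.
apply: (@le_trans _ _ (\sum_(t \in S) (l * fine (f t x) + (1 - l) * fine (f t y))%:E)).
  apply: lee_fsum => // t St.
  by apply: (fcvx t St (x, fine (f t x)) (y, fine (f t y))); rewrite // /epigraph /= fineK ?fx ?fy.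
rewrite fsumEFin // fsbig_split // -!mulr_fsumr lee_fin.
by apply: lerD; apply: ler_wpM2l.
Qed.

Lemma convex_efun_sup (I : Type) (A : set I) (g : I -> X -> \bar R) :
  (forall i, A i -> convex_efun (g i)) ->
  convex_efun (fun x => ereal_sup [set g i x | i in A]).
Proof.
move=> gcvx p q l l01; rewrite /epigraph /= => gp gq.
apply: ge_ereal_sup => _ [i Ai <-].
apply: (gcvx i Ai p q l l01); [apply: le_trans gp | apply: le_trans gq];
  by apply: ereal_sup_ubound; exists i.
Qed.

Lemma convex_efun_inf_directed (I : Type) (A : set I) (h : I -> X -> \bar R) :
  (forall i j, A i -> A j -> exists k,
     [/\ A k, forall x, h k x <= h i x & forall x, h k x <= h j x]) ->
  (forall i, A i -> convex_efun (h i)) ->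
  convex_efun (fun x => ereal_inf [set h i x | i in A]).
Proof.
move=> hdir hcvx [x a] [y b] l l01; rewrite /epigraph /= => hx hy.
apply/lee_addgt0Pr => e e0.
have near_inf z c : ereal_inf [set h i z | i in A] <= c%:E ->
    exists2 i, A i & h i z <= (c + e)%:E.
  move=> hz; have [_ [i Ai <-] hiz] : exists2 u, [set h i z | i in A] u & u < (c + e)%:E.
    by apply: ereal_inf_lt; apply: le_lt_trans hz _; rewrite lte_fin ltrDl.
  by exists i => //; exact: ltW.
have [i Ai hix] := near_inf x a hx; have [j Aj hjy] := near_inf y b hy.
have [k [Ak hki hkj]] := hdir i j Ai Aj.
apply: le_trans (ereal_inf_lbound _) _; first by exists k.
apply: le_trans (hcvx k Ak (x, a + e)%R (y, b + e)%R l l01 _ _) _;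
  [exact: le_trans (hki x) hix | exact: le_trans (hkj y) hjy |].
rewrite /= -EFinD lee_fin (_ : _ + _ = l * a + (1 - l) * b + e)%R //; ring.
Qed.

End ConvexEfun.

Theorem proposition2p1 (R : realType) (X : completeNormedModType R)
    (T : choiceType) (t0 : T) (f : T -> X -> \bar R)
    (f_noninf : forall t x, f t x != -oo)
    (f_convex : forall t, convex_efun (f t)) :
  convex_efun (upper_infsum f).
Proof.
apply: convex_efun_inf_directed => [S1 S2 finS1 finS2 | S0 _]; last first.
  apply: convex_efun_sup => S [finS _].
  by apply: convex_efun_fsbig => // t x _.
exists (S1 `|` S2); split => [|x|x]; first by rewrite /= finite_setU.
all: apply: ereal_sup_le => _ [S [finS S12S] <-]; exists S => //.
all: split => //; apply: subset_trans S12S.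
all: first [exact: subsetUl | exact: subsetUr].
Qed.
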